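(* Let $V$ be a non-degenerate symplectic space of dimension $n=2r$ over a field $\mathbb{F}$ with $|\mathbb{F}|\ge3$, with hyperbolic basis $\{e_i,f_i\}_{i=1}^r$, $G=\mathrm{Sp}(V)$, and let $B$ be the stabilizer in $G$ of the standard chamber $C=\{C_l\}_{l=1}^{n-1}$ of $\Gamma(V)$. Then $B\cong(\mathbb{F}\rtimes\mathrm{GL}_1(\mathbb{F}))^{r}$, where for $j=1,\dots,r$ the $j$-th factor is realized as the group $B_j$ acting on $\langle e_j,f_j\rangle$, with respect to the basis $(e_j,f_j)$, by the matrices $\begin{pmatrix}a_j&b_j\\0&a_j^{-1}\end{pmatrix}$, $a_j\in\mathbb{F}^*$, $b_j\in\mathbb{F}$ (and $B$ is the group of block-diagonal elements of $G$ with such blocks). Moreover, the kernel of the action of $G$ on $\Gamma(V)$ is $\{\pm1\}$.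
   Context: $\mathsf{s}(e_i,e_j)=\mathsf{s}(f_i,f_j)=0$, $\mathsf{s}(e_i,f_j)=\delta_{ij}$. Matrices act with the convention that the $k$-th column gives the coordinates of the image of the $k$-th basis vector. $\mathrm{Rad}(U)=U\cap U^\perp$. $\Gamma(V)$: for $i\in\{1,\dots,n-1\}$ the objects of type $i$ are the $i$-dimensional subspaces $U$ with $\dim\mathrm{Rad}(U)\le1$; $X,Y$ incident iff $X=Y$, or $X\subseteq Y$ with $X\cap\mathrm{Rad}(Y)=0$, or vice versa. With $h_{2i-1}=e_i$, $h_{2i}=f_i$, the standard chamber is $C_l=\langle h_1,\dots,h_l\rangle$. *)

From HB Require Import structures.
From mathcomp Require Import all_boot all_order all_algebra.
Set Implicit Arguments. Unset Strict Implicit. Unset Printing Implicit Defensive.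
Import GRing.Theory Num.Theory.
Local Open Scope ring_scope.

(* V = F^n with n = 2r; the ordered basis is h_0,...,h_(n-1)
   (0-based) with h_(2i) = e_(i+1), h_(2i+1) = f_(i+1).
   A matrix g : 'M_n acts on COLUMN coordinate vectors, x |-> g *m x
   (the k-th column of g is the image of h_k).
   Subspaces of V are represented as row spaces (mxalgebra) of square
   matrices whose rows are the (transposed) coordinate vectors; hence the
   image of the subspace U under g is the row space of U *m g^T. *)

Section Defs.
Variables (F : fieldType) (r : nat).
Local Notation n := (r.*2).

(* Gram matrix of s: s(x,y) = x^T J y with s(e_i,f_j) = delta_ij,
   s(e_i,e_j) = s(f_i,f_j) = 0 (and hence s(f_j,e_i) = -delta_ij). *)
Definition sympJ : 'M[F]_n :=
  \matrix_(i, j) (if ~~ odd i && (j == i.+1 :> nat) then 1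
                  else if odd i && (j.+1 == i :> nat) then -1 else 0).

Definition is_sp (g : 'M[F]_n) : Prop := g^T *m sympJ *m g = sympJ.

Definition sperp (U : 'M[F]_n) : 'M[F]_n := kermx ((U *m sympJ)^T).
Definition srad (U : 'M[F]_n) : 'M[F]_n := (U :&: sperp U)%MS.

Definition gamma_obj (U : 'M[F]_n) : Prop :=
  (0 < \rank U < n)%N /\ (\rank (srad U) <= 1)%N.

Definition stabilizes (g U : 'M[F]_n) : Prop := (U *m g^T == U)%MS.

Definition std_chamber (l : nat) : 'M[F]_n := pid_mx l.

Definition in_B (g : 'M[F]_n) : Prop :=
  is_sp g /\ forall l, (0 < l < n)%N -> stabilizes g (std_chamber l).

Definition in_kernel (g : 'M[F]_n) : Prop :=
  is_sp g /\ forall U, gamma_obj U -> stabilizes g U.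

Definition blk_of (i : 'I_n) : 'I_r :=
  Ordinal (elimT idP (etrans (ltn_half_double i r) (ltn_ord i))).

Definition blockB (a b : 'I_r -> F) : 'M[F]_n :=
  \matrix_(i, j)
    (if i./2 == j./2 then
       (if ~~ odd i then (if ~~ odd j then a (blk_of i) else b (blk_of i))
        else (if odd j then (a (blk_of i))^-1 else 0))
     else 0).

End Defs.

From HB Require Import structures.
From mathcomp Require Import all_boot all_order all_algebra.
Set Implicit Arguments. Unset Strict Implicit. Unset Printing Implicit Defensive.
Import GRing.Theory Num.Theory.
Local Open Scope ring_scope.

(* In the basis e_1, f_1, ..., e_r, f_r the chamber C is the standard flag, so
   its stabilizer consists of the invertible upper triangular matrices.  For an
   upper triangular symplectic g one proceeds block by block from the top: the
   columns e_j, f_j vanish outside the rows e_j, f_j (below by triangularity,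
   above by the blocks already treated), so evaluating s(g e_j, g x) and
   s(g f_j, g x) gives a_j d_j = 1 and shows that the rows e_j, f_j vanish
   outside the columns e_j, f_j.  Hence g is block diagonal with blocks
   [[a, b], [0, a^-1]].  An element of the kernel fixes every line, lines being
   objects of Gamma(V), so it is a scalar c, and s(c e_1, c f_1) = 1 gives
   c^2 = 1. *)

Section SquareMatrices.
Variables (F : fieldType) (k : nat).
Implicit Type A : 'M[F]_k.

Lemma pid_mx_mulmxE A l i j : (pid_mx l *m A) i j = if (i < l)%N then A i j else 0.
Proof.
rewrite mxE (bigD1 i) //= big1 ?addr0 => [|i' ne]; rewrite mxE.
  by rewrite eqxx; case: ifP; rewrite ?mul1r ?mul0r.
by rewrite val_eqE eq_sym (negbTE ne) mul0r.
Qed.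

Lemma mulmx_pid_mxE A l i j : (A *m pid_mx l) i j = if (j < l)%N then A i j else 0.
Proof.
rewrite mxE (bigD1 j) //= big1 ?addr0 => [|j' ne]; rewrite mxE.
  by rewrite eqxx; case: ifP; rewrite ?mulr1 ?mulr0.
by rewrite val_eqE (negbTE ne) mulr0.
Qed.

Lemma pid_mx_mul_trig_sub A l :
  is_trig_mx A -> ((pid_mx l : 'M_k) *m A <= (pid_mx l : 'M_k))%MS.
Proof.
move=> /is_trig_mxP A_trig.
have -> : (pid_mx l : 'M_k) *m A = (pid_mx l *m A) *m pid_mx l.
  apply/matrixP => i j; rewrite mulmx_pid_mxE !pid_mx_mulmxE.
  case: (ltnP j l) => // le_lj; case: ltnP => // lt_il.
  by rewrite A_trig // (leq_trans lt_il le_lj).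
exact: submxMl.
Qed.

Lemma trig_of_pid_mx_mul_sub A :
  (forall l, (0 < l < k)%N -> ((pid_mx l : 'M_k) *m A <= (pid_mx l : 'M_k))%MS) ->
  is_trig_mx A.
Proof.
move=> A_stab; apply/is_trig_mxP => i j lt_ij.
have /A_stab /submxP[D eqD] : (0 < i.+1 < k)%N by rewrite /= (leq_ltn_trans lt_ij).
have := congr1 (fun M : 'M_k => M i j) eqD.
by rewrite pid_mx_mulmxE ltnSn mulmx_pid_mxE ltnNge lt_ij.
Qed.

Lemma trig_unitmx A : is_trig_mx A -> (forall i, A i i != 0) -> A \in unitmx.
Proof.
by move=> A_trig A_diag; rewrite unitmxE det_trig // unitfE; apply/prodf_neq0.
Qed.

Lemma scalar_of_stable_lines A : (forall v : 'rV[F]_k, stablemx v A) -> is_scalar_mx A.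
Proof.
move=> A_stab.
have eigen i : exists c, row i A = c *: delta_mx 0 i.
  by apply/sub_rVP; rewrite rowE.
have off i j : i != j -> A i j = 0.
  move=> ne; have [c /rowP/(_ j)] := eigen i.
  by rewrite !mxE eq_sym (negbTE ne) mulr0.
have diag i j : A i i = A j j.
  have [-> //|ne] := eqVneq i j.
  have /sub_rVP[c /rowP Ec] := A_stab (delta_mx 0 i + delta_mx 0 j).
  move: (Ec i) (Ec j); rewrite mulmxDl -!rowE !mxE !eqxx [j == i]eq_sym (negbTE ne) /=.
  by rewrite (off _ _ ne) (off j i) 1?eq_sym // !addr0 !add0r => -> ->.
apply/is_scalar_mxP; case: (posnP k) => [k0 | k_gt0].
  by exists 0; apply/matrixP => i; suff: (i < 0)%N by []; rewrite -[0%N]k0.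
exists (A (Ordinal k_gt0) (Ordinal k_gt0)); apply/matrixP => i j; rewrite mxE.
by case: eqVneq => [<-|ne]; [exact: diag | exact: off].
Qed.

End SquareMatrices.

Section Hyperbolic.
Variables (F : fieldType) (r : nat).
Local Notation n := (r.*2).
Local Notation blk := (@blk_of r).
Local Notation J := (sympJ F r).
Implicit Types (i j p q : 'I_n) (m : 'I_r).

Definition e_idx (m : 'I_r) : 'I_n := Ordinal (etrans (ltn_double m r) (ltn_ord m)).
Definition f_idx (m : 'I_r) : 'I_n := Ordinal (etrans (ltn_Sdouble m r) (ltn_ord m)).

Lemma blk_e_idx m : blk (e_idx m) = m.
Proof. by apply: val_inj; rewrite /= half_double. Qed.

Lemma blk_f_idx m : blk (f_idx m) = m.
Proof. by apply: val_inj; rewrite /= uphalf_double. Qed.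

Variant idx_spec : 'I_n -> 'I_r -> Type :=
  | IdxE m : idx_spec (e_idx m) m
  | IdxF m : idx_spec (f_idx m) m.

Lemma idxP i : idx_spec i (blk i).
Proof.
have [i_odd|i_even] := boolP (odd i).
  have -> : i = f_idx (blk i).
    by apply: val_inj; rewrite /= -{1}(odd_double_half i) i_odd.
  by rewrite blk_f_idx; constructor.
have -> : i = e_idx (blk i).
  by apply: val_inj; rewrite /= -{1}(odd_double_half i) (negbTE i_even).
by rewrite blk_e_idx; constructor.
Qed.

Lemma blk_ltn i j : (blk i < blk j)%N -> (i < j)%N.
Proof. by rewrite !ltnNge; apply: contra => /half_leq. Qed.

Lemma double_neq_odd a b : a.*2 != b.*2.+1.
Proof. by apply/eqP => /(congr1 odd); rewrite /= !odd_double. Qed.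

Lemma e_idx_neq_f_idx m m' : e_idx m != f_idx m'.
Proof. exact: double_neq_odd. Qed.

Lemma sum_blk (f : 'I_n -> F) : \sum_k f k = \sum_m (f (e_idx m) + f (f_idx m)).
Proof.
rewrite (partition_big blk xpredT) //=; apply: eq_bigr => m _.
rewrite (bigD1 (e_idx m)) ?blk_e_idx //= (bigD1 (f_idx m)) /=; last first.
  by rewrite blk_f_idx eqxx eq_sym e_idx_neq_f_idx.
rewrite big1 ?addr0 // => i /andP[/andP[/eqP blk_i ne_e] ne_f].
by case: (idxP i) blk_i ne_e ne_f => m' <-; rewrite eqxx.
Qed.

Lemma sympJ_ee m m' : J (e_idx m) (e_idx m') = 0.
Proof. by rewrite mxE /= !odd_double /= (negbTE (double_neq_odd _ _)). Qed.

Lemma sympJ_ef m m' : J (e_idx m) (f_idx m') = (m == m')%:R.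
Proof. by rewrite mxE /= !odd_double /= eqSS (inj_eq double_inj) val_eqE eq_sym; case: eqP. Qed.

Lemma sympJ_fe m m' : J (f_idx m) (e_idx m') = - (m == m')%:R.
Proof.
by rewrite mxE /= !odd_double /= eqSS (inj_eq double_inj) val_eqE eq_sym; case: eqP; rewrite ?oppr0.
Qed.

Lemma sympJ_ff m m' : J (f_idx m) (f_idx m') = 0.
Proof. by rewrite mxE /= !odd_double /= eqSS eq_sym (negbTE (double_neq_odd _ _)). Qed.

Definition sympJE := (sympJ_ee, sympJ_ef, sympJ_fe, sympJ_ff).

Lemma sympJ_offblk i j : blk i != blk j -> J i j = 0.
Proof. by case: idxP => m; case: idxP => m' ne; rewrite sympJE // (negbTE ne) ?oppr0. Qed.

Section BlockBEntries.
Variables a b : 'I_r -> F.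
Local Notation B := (blockB a b).

Lemma blockB_ee m m' : B (e_idx m) (e_idx m') = if m == m' then a m else 0.
Proof. by rewrite mxE /= !half_double !odd_double val_eqE blk_e_idx. Qed.

Lemma blockB_ef m m' : B (e_idx m) (f_idx m') = if m == m' then b m else 0.
Proof. by rewrite mxE /= half_double uphalf_double !odd_double val_eqE blk_e_idx. Qed.

Lemma blockB_fe m m' : B (f_idx m) (e_idx m') = 0.
Proof. by rewrite mxE /= !odd_double; case: ifP. Qed.

Lemma blockB_ff m m' : B (f_idx m) (f_idx m') = if m == m' then (a m)^-1 else 0.
Proof. by rewrite mxE /= !uphalf_double !odd_double val_eqE blk_f_idx. Qed.

End BlockBEntries.

Definition blockBE := (blockB_ee, blockB_ef, blockB_fe, blockB_ff).

Lemma blockB_inj (a b a' b' : 'I_r -> F) :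
  blockB a b = blockB a' b' -> a =1 a' /\ b =1 b'.
Proof.
move=> /matrixP eq_ab; split=> m.
  by have := eq_ab (e_idx m) (e_idx m); rewrite !blockB_ee eqxx.
by have := eq_ab (e_idx m) (f_idx m); rewrite !blockB_ef eqxx.
Qed.

Definition row_in_blk (A : 'M[F]_n) i := forall j, blk j != blk i -> A i j = 0.
Definition col_in_blk (A : 'M[F]_n) j := forall i, blk i != blk j -> A i j = 0.

Lemma row_in_blk_tr (A : 'M[F]_n) j : col_in_blk A j -> row_in_blk A^T j.
Proof. by move=> Aj i ne; rewrite mxE Aj. Qed.

Lemma blockB_row_in_blk (a b : 'I_r -> F) i : row_in_blk (blockB a b) i.
Proof.
move=> j; case: (idxP i) => m; case: (idxP j) => m' ne;
  by rewrite blockBE // eq_sym (negbTE ne).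
Qed.

Lemma mulmx_row_in_blk (A B : 'M[F]_n) i j : row_in_blk A i ->
  (A *m B) i j = A i (e_idx (blk i)) * B (e_idx (blk i)) j
               + A i (f_idx (blk i)) * B (f_idx (blk i)) j.
Proof.
move=> Ai; rewrite mxE sum_blk (bigD1 (blk i)) //= big1 ?addr0 // => m ne.
by rewrite !Ai ?blk_e_idx ?blk_f_idx // !mul0r addr0.
Qed.

Lemma sp_form_col_in_blk (A B : 'M[F]_n) p q : col_in_blk A p ->
  (A^T *m J *m B) p q = A (e_idx (blk p)) p * B (f_idx (blk p)) q
                      - A (f_idx (blk p)) p * B (e_idx (blk p)) q.
Proof.
move=> Ap; have ATp := row_in_blk_tr Ap.
have AJp : row_in_blk (A^T *m J) p.
  move=> j ne; rewrite mulmx_row_in_blk // !sympJ_offblk ?mulr0 ?addr0 //.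
    by rewrite blk_f_idx eq_sym.
  by rewrite blk_e_idx eq_sym.
rewrite mulmx_row_in_blk // !mulmx_row_in_blk // !sympJE eqxx !mxE.
by rewrite !mulr0 add0r addr0 mulr1 mulrN1 mulNr addrC.
Qed.

Lemma blockB_mul (a b a' b' : 'I_r -> F) :
  blockB a b *m blockB a' b'
  = blockB (fun m => a m * a' m) (fun m => a m * b' m + b m / a' m).
Proof.
apply/matrixP => i j; rewrite mulmx_row_in_blk; last exact: blockB_row_in_blk.
case: (idxP i) => m; case: (idxP j) => m'; rewrite !blockBE eqxx;
  case: eqP => _; rewrite ?mulr0 ?mul0r ?addr0 ?add0r ?invfM //.
Qed.

Lemma blockB_sp (a b : 'I_r -> F) : (forall m, a m != 0) -> is_sp (blockB a b).
Proof.
move=> a_neq0; apply/matrixP => p q.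
rewrite sp_form_col_in_blk; last by move=> i ne; apply: blockB_row_in_blk; rewrite eq_sym.
case: (idxP p) => m; case: (idxP q) => m';
  rewrite !blockBE !sympJE eqxx;
  case: eqP => _; rewrite ?mulr0 ?mul0r ?subr0 ?sub0r ?oppr0 ?mulfV ?mulVf //.
by rewrite mulrC subrr.
Qed.

Section SymplecticTriangular.
Variable g : 'M[F]_n.
Hypotheses (g_sp : is_sp g) (g_trig : is_trig_mx g^T).

Lemma sp_trig_below i j : (j < i)%N -> g i j = 0.
Proof. by move=> lt_ji; have /is_trig_mxP/(_ j i lt_ji) := g_trig; rewrite mxE. Qed.

Lemma sp_entry_col_in_blk p q : col_in_blk g p ->
  g (e_idx (blk p)) p * g (f_idx (blk p)) q - g (f_idx (blk p)) p * g (e_idx (blk p)) q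
  = J p q.
Proof. by move=> gp; rewrite -sp_form_col_in_blk // g_sp. Qed.

Lemma sp_trig_row_in_blk m : col_in_blk g (e_idx m) -> col_in_blk g (f_idx m) ->
  [/\ g (e_idx m) (e_idx m) * g (f_idx m) (f_idx m) = 1,
      row_in_blk g (e_idx m) & row_in_blk g (f_idx m)].
Proof.
move=> ge gf; have gfe : g (f_idx m) (e_idx m) = 0 by apply: sp_trig_below => /=.
have det : g (e_idx m) (e_idx m) * g (f_idx m) (f_idx m) = 1.
  by have := sp_entry_col_in_blk (f_idx m) ge; rewrite blk_e_idx gfe mul0r subr0 sympJ_ef eqxx.
have [a_neq0 d_neq0] : g (e_idx m) (e_idx m) != 0 /\ g (f_idx m) (f_idx m) != 0.
  by apply/andP; rewrite -negb_or -mulf_eq0 det oner_eq0.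
have rowf : row_in_blk g (f_idx m).
  move=> q; rewrite blk_f_idx => ne; have := sp_entry_col_in_blk q ge.
  rewrite blk_e_idx gfe mul0r subr0 sympJ_offblk ?blk_e_idx 1?eq_sym //.
  by move/eqP; rewrite mulf_eq0 (negbTE a_neq0) => /eqP.
split=> // q; rewrite blk_e_idx => ne; have := sp_entry_col_in_blk q gf.
rewrite blk_f_idx (rowf q) ?blk_f_idx // mulr0 sub0r sympJ_offblk ?blk_f_idx 1?eq_sym //.
by move/eqP; rewrite oppr_eq0 mulf_eq0 (negbTE d_neq0) => /eqP.
Qed.

Lemma sp_trig_col_in_blk j : col_in_blk g j.
Proof.
have [k] := ubnP (blk j); elim: k j => // k IH j lt_jk i ne.
case: (ltngtP (blk i) (blk j)) => [lt_ij | lt_ji | eq_ij].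
- have lt_ik : (blk i < k)%N by rewrite (leq_trans lt_ij) // -ltnS.
  have [ge gf] : col_in_blk g (e_idx (blk i)) /\ col_in_blk g (f_idx (blk i)).
    by split; apply: IH; rewrite ?blk_e_idx ?blk_f_idx.
  have [_ rowe rowf] := sp_trig_row_in_blk ge gf.
  by case: (idxP i) ne rowe rowf => m ne rowe rowf; [apply: rowe | apply: rowf];
    rewrite ?blk_e_idx ?blk_f_idx eq_sym.
- by apply: sp_trig_below; apply: blk_ltn.
- by case/eqP: ne; apply: val_inj.
Qed.

Lemma sp_trig_blockB : exists a b, (forall m, a m != 0) /\ g = blockB a b.
Proof.
have det m : g (e_idx m) (e_idx m) * g (f_idx m) (f_idx m) = 1.
  by case: (sp_trig_row_in_blk (@sp_trig_col_in_blk (e_idx m))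
                               (@sp_trig_col_in_blk (f_idx m))).
have a_neq0 m : g (e_idx m) (e_idx m) != 0.
  by apply: contra_eq_neq (det m) => ->; rewrite mul0r eq_sym oner_neq0.
exists (fun m => g (e_idx m) (e_idx m)), (fun m => g (e_idx m) (f_idx m)); split=> //.
apply/matrixP => i j; case: (idxP i) => m; case: (idxP j) => m';
  rewrite !blockBE; case: (eqVneq m m') => [<-|ne] //;
  try by apply: sp_trig_col_in_blk; rewrite ?blk_e_idx ?blk_f_idx.
  by apply: sp_trig_below.
by apply: (mulfI (a_neq0 m)); rewrite det mulfV.
Qed.

End SymplecticTriangular.

Lemma blockB_trig (a b : 'I_r -> F) : is_trig_mx (blockB a b)^T.
Proof.
apply/is_trig_mxP => i j lt_ij; rewrite mxE.
case: (eqVneq (blk j) (blk i)) => [eq_ji|ne].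
  2: by apply: blockB_row_in_blk; rewrite eq_sym.
move: eq_ji lt_ij; case: (idxP i) => m; case: (idxP j) => m' <- /= lt_ij;
  rewrite !blockBE ?eqxx //; by rewrite ltnNge ?leqnn ?leqnSn in lt_ij.
Qed.

Lemma blockB_unitmx (a b : 'I_r -> F) : (forall m, a m != 0) -> blockB a b \in unitmx.
Proof.
move=> a_neq0; rewrite -unitmx_tr; apply: trig_unitmx (blockB_trig _ _) _ => i.
by rewrite mxE; case: (idxP i) => m; rewrite !blockBE eqxx ?invr_eq0.
Qed.

Lemma stabilizes_unit (g U : 'M[F]_n) :
  g \in unitmx -> (U *m g^T <= U)%MS -> stabilizes g U.
Proof.
move=> g_unit sUgU; rewrite /stabilizes -(mxrank_leqif_eq sUgU).
by rewrite mxrankMfree ?row_free_unit ?unitmx_tr.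
Qed.

Lemma in_BP (g : 'M[F]_n) :
  in_B g <-> exists a b, (forall m, a m != 0) /\ g = blockB a b.
Proof.
split=> [[g_sp g_stab] | [a [b [a_neq0 ->]]]].
  apply: sp_trig_blockB g_sp _; apply: trig_of_pid_mx_mul_sub => l /g_stab.
  by case/andP.
split=> [|l _]; first exact: blockB_sp.
apply: stabilizes_unit; first exact: blockB_unitmx.
exact/pid_mx_mul_trig_sub/blockB_trig.
Qed.

Lemma in_kernel_stable_lines (g : 'M[F]_n) :
  (0 < r)%N -> in_kernel g -> forall v : 'rV[F]_n, stablemx v g^T.
Proof.
move=> r_gt0 [_ g_stab] v; have [->|v_neq0] := eqVneq v 0; first by rewrite mul0mx sub0mx.
have rank_v : \rank <<v>>%MS = 1%N by rewrite genmxE rank_rV v_neq0.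
have /g_stab/andP[sub_vg _] : gamma_obj <<v>>%MS.
  split; first by rewrite rank_v -[1%N]/(0.*2.+1) ltn_Sdouble.
  by rewrite (leq_trans (mxrankS (capmxSl _ _))) ?rank_v.
by rewrite (eqmxMr _ (genmxE v)) genmxE in sub_vg.
Qed.

Lemma sp_scalar (c : F) : (0 < r)%N -> is_sp (c%:M : 'M_n) -> c = 1 \/ c = -1.
Proof.
move=> r_gt0; set m := Ordinal r_gt0.
rewrite /is_sp tr_scalar_mx mul_scalar_mx mul_mx_scalar scalerA.
move=> /matrixP/(_ (e_idx m) (f_idx m)); rewrite mxE sympJ_ef eqxx mulr1 -expr2.
by move/eqP; rewrite sqrf_eq1 => /orP[] /eqP; [left | right].
Qed.

Lemma scalar_in_kernel (c : F) : c ^+ 2 = 1 -> in_kernel (c%:M : 'M_n).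
Proof.
move=> c2; split=> [|U _].
  by rewrite /is_sp tr_scalar_mx mul_scalar_mx mul_mx_scalar scalerA -expr2 c2 scale1r.
have c_neq0 : c != 0 by apply: contra_eq_neq c2 => ->; rewrite expr0n eq_sym oner_neq0.
by rewrite /stabilizes tr_scalar_mx mul_mx_scalar; apply/eqmxP; apply: eqmx_scale.
Qed.

Lemma in_kernelP (g : 'M[F]_n) : in_kernel g <-> g = 1%:M \/ g = - 1%:M.
Proof.
split=> [g_ker | [] ->]; last first.
- by rewrite -scaleN1r scalemx1; apply: scalar_in_kernel; rewrite sqrrN expr1n.
- exact/scalar_in_kernel/expr1n.
have [r0 | r_gt0] := posnP r.
  by left; apply/matrixP => i; have := ltn_ord i; rewrite {2}r0.
have /is_scalar_mxP[c gT_c] :=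
  scalar_of_stable_lines (in_kernel_stable_lines r_gt0 g_ker).
have g_c : g = c%:M by rewrite -[g]trmxK gT_c tr_scalar_mx.
case: g_ker; rewrite g_c => c_sp _.
by case: (sp_scalar r_gt0 c_sp) => ->; [left | right; rewrite -scaleN1r scalemx1].
Qed.

End Hyperbolic.

Theorem lemma5p7 (F : fieldType) (r : nat)
    (HF : exists x : F, (x != 0) && (x != 1)) :
  (* B is exactly the group of block-diagonal elements with blocks
     [[a_j, b_j], [0, a_j^-1]], a_j <> 0 *)
  (forall g : 'M[F]_(r.*2),
     in_B g <-> exists a b : 'I_r -> F, (forall j, a j != 0) /\ g = blockB a b)
  (* the parametrization is injective ... *)
  /\ (forall a b a' b' : 'I_r -> F,
        blockB a b = blockB a' b' -> a =1 a' /\ b =1 b')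
  (* ... and componentwise multiplicative: B = B_1 x ... x B_r with
     B_j = { [[a, b], [0, a^-1]] } = F x| GL_1(F) *)
  /\ (forall a b a' b' : 'I_r -> F,
        blockB a b *m blockB a' b'
        = blockB (fun j => a j * a' j) (fun j => a j * b' j + b j / a' j))
  /\ (forall g : 'M[F]_(r.*2), in_kernel g <-> g = 1%:M \/ g = - 1%:M).
Proof.
split; first exact: in_BP.
by split; [exact: blockB_inj | split; [exact: blockB_mul | exact: in_kernelP]].
Qed.
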